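(* There exists a function $f(n,w,d)$ such that for all positive integers $n,w,d$ the following holds. Let $G$ be a connected graph with $\Delta(G)\leq d$ and let $(T,\mathcal{Y})$ be a lean tree-decomposition of $G$ of width at most $w$. If $|V(G)|\geq f(n,w,d)$, then $T$ contains a path $P$ with interior vertices $t_1,\ldots,t_n$, occurring along $P$ in this order, such that: (i) for some positive integer $s\leq w+1$, $|Y_{t_i}|=s$ for all $i\in[n]$ and $|Y_t|\geq s$ for every vertex $t$ of $P$ between $t_1$ and $t_n$; and (ii) there is a set $U\subseteq V(G)$ with $Y_{t_i}\cap Y_{t_j}=U$ for all distinct $i,j\in[n]$.
   Context: All graphs are finite and loopless but may have parallel edges; $[n]=\{1,\dots,n\}$. A tree-decomposition of $G$ is a pair $(T,\mathcal{Y})$ where $T$ is a tree and $\mathcal{Y}=\{Y_t\}_{t\in V(T)}$ is a family of subsets of $V(G)$ (bags) such that (W1) $\bigcup_{t} Y_t=V(G)$ and every edge of $G$ has both ends in some $Y_t$; and (W2) if $t'$ lies on the path of $T$ between $t$ and $t''$ then $Y_t\cap Y_{t''}\subseteq Y_{t'}$. Its width is $\max_t(|Y_t|-1)$. It is lean if additionally: (W3) for every two vertices $t,t'$ of $T$ and every positive integer $k$, either $G$ has $k$ vertex-disjoint paths between $Y_t$ and $Y_{t'}$, or some vertex $t''$ on the path of $T$ between $t$ and $t'$ has $|Y_{t''}|<k$; (W4) distinct vertices $t\ne t'$ of $T$ have $Y_t\neq Y_{t'}$; (W5) if $t_0\in V(T)$ and $B$ is a component of $T-t_0$, then $\bigcup_{t\in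 V(B)}Y_t\setminus Y_{t_0}\neq\emptyset$. *)

From mathcomp Require Import all_boot.
Set Implicit Arguments. Unset Strict Implicit. Unset Printing Implicit Defensive.

Section Graphs.
Variables (V E : finType) (ends : E -> V * V).

Definition loopless : Prop := forall e, (ends e).1 != (ends e).2.

Definition gdeg (v : V) : nat :=
  #|[set e | ((ends e).1 == v) || ((ends e).2 == v)]|.

Definition max_deg_le (d : nat) : Prop := forall v, gdeg v <= d.

Definition gadj : rel V :=
  fun u v => [exists e, (ends e == (u, v)) || (ends e == (v, u))].

Definition gconnected : Prop := forall u v, connect gadj u v.
End Graphs.

Definition upath (T : eqType) (e : rel T) (x : T) (p : seq T) : bool :=
  path e x p && uniq (x :: p).

Definition disjoint_paths (V E : finType) (ends : E -> V * V)
  (A B : {set V}) (k : nat) : Prop :=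
  exists P : 'I_k -> V * seq V,
    (forall i, [/\ upath (gadj ends) (P i).1 (P i).2,
                   (P i).1 \in A & last (P i).1 (P i).2 \in B]) /\
    (forall i j, i != j -> forall v, v \in (P i).1 :: (P i).2 ->
                                     v \notin (P j).1 :: (P j).2).

Definition is_tree (I : finType) (T : rel I) : Prop :=
  [/\ symmetric T, irreflexive T, (forall x y, connect T x y) &
      (forall x p q, upath T x p -> upath T x q -> last x p = last x q -> p = q)].

Definition on_tpath (I : finType) (T : rel I) (t t' u : I) : Prop :=
  exists p, [/\ upath T t p, last t p = t' & u \in t :: p].

Definition tree_decomp (V E : finType) (ends : E -> V * V)
  (I : finType) (T : rel I) (Y : I -> {set V}) : Prop :=
  [/\ is_tree T,
      (forall v, exists t, v \in Y t),
      (forall e, exists t, ((ends e).1 \in Y t) && ((ends e).2 \in Y t)) &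
      (forall t t' t'', on_tpath T t t'' t' -> Y t :&: Y t'' \subset Y t')].

Definition width_le (I V : finType) (Y : I -> {set V}) (w : nat) : Prop :=
  forall t, #|Y t| <= w.+1.

Definition lean_tree_decomp (V E : finType) (ends : E -> V * V)
  (I : finType) (T : rel I) (Y : I -> {set V}) : Prop :=
  [/\ tree_decomp ends T Y,
      (forall t t' k, 0 < k ->
         disjoint_paths ends (Y t) (Y t') k \/
         exists t'', on_tpath T t t' t'' /\ #|Y t''| < k),
      (forall t t', t != t' -> Y t != Y t') &
      (* W5: every component of T - t0 (the class of some t <> t0 under
         connectivity avoiding t0) has a bag with a vertex outside Y t0 *)
      (forall t0 t, t != t0 ->
         exists t', connect [rel x y | T x y && (x != t0) && (y != t0)] t t'
                    /\ ~~ (Y t' \subset Y t0))].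

From mathcomp Require Import all_boot zify.
Set Implicit Arguments. Unset Strict Implicit. Unset Printing Implicit Defensive.

(* By (W5) every branch of T at a node t contains a vertex of G outside Y t;
   as G is connected, each branch receives its own edge of G leaving Y t, so
   T has maximum degree at most (w+1)d + 1 and, having at least |V(G)|/(w+1)
   nodes, contains a long path.  Along it the bags are pairwise distinct (W4),
   hence at most one is empty, and a long window of nonempty bags remains.
   Repeatedly either the least bag size occurring in the window occurs often,
   or a long subwindow avoids it; this yields a level s and a subwindow in
   which all bags have size at least s and many have size exactly s.  The
   sunflower lemma applied to the latter bags gives t_1, ..., t_n. *)

Lemma card_bigcup_le (T I : finType) (A : {pred I}) (F : I -> {set T}) :
  #|\bigcup_(i in A) F i| <= \sum_(i in A) #|F i|.
Proof.
apply: (big_ind2 (fun (X : {set T}) n => #|X| <= n)) => [|X1 n1 X2 n2 le1 le2|//].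
  by rewrite cards0.
exact: leq_trans (leq_card_setU X1 X2).1 (leq_add le1 le2).
Qed.

Lemma leq_card_witness (X Z : finType) (A : {set X}) (B : {set Z}) (R : X -> Z -> bool) :
  (forall x, x \in A -> exists2 z, z \in B & R x z) ->
  (forall x1 x2 z, x1 \in A -> x2 \in A -> R x1 z -> R x2 z -> x1 = x2) ->
  #|A| <= #|B|.
Proof.
move=> witness R_inj.
pose g x := [pick z in B | R x z].
have gP x : x \in A -> exists2 z, g x = Some z & (z \in B) && R x z.
  move=> Ax; rewrite /g; case: pickP => [z|none]; first by exists z.
  by have [z Bz Rxz] := witness x Ax; move: (none z); rewrite Bz Rxz.
have g_inj : {in A &, injective g}.
  move=> x1 x2 A1 A2 g12; have [z g1 /andP [_ R1]] := gP x1 A1.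
  have [z' g2 /andP [_ R2]] := gP x2 A2.
  by move: g12; rewrite g1 g2 => -[Ez]; apply: (R_inj _ _ z) => //; rewrite Ez.
rewrite -(card_in_imset g_inj) -(card_imset B (@Some_inj _)).
apply/subset_leq_card/subsetP => _ /imsetP [x Ax ->].
by have [z -> /andP [Bz _]] := gP x Ax; apply: imset_f.
Qed.

Lemma count_inj_eq_le1 (X Z : eqType) (f : X -> Z) (s : seq X) z :
  uniq s -> {in s &, injective f} -> count (fun x => f x == z) s <= 1.
Proof.
move=> s_uniq f_inj.
rewrite -[count _ s]/(count (preim f (pred1 z)) s) -count_map.
by rewrite count_uniq_mem ?leq_b1 // map_inj_in_uniq.
Qed.

Lemma card_window M lo len (P : pred nat) : lo + len <= M ->
  #|[set i : 'I_M | (lo <= i < lo + len) && P i]| = count P (iota lo len).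
Proof.
move=> window_in.
rewrite cardsE cardE /enum_mem size_filter -enumT.
rewrite -(count_map val (fun m => (lo <= m < lo + len) && P m)) val_enum_ord.
have -> : iota 0 M = iota 0 lo ++ iota lo len ++ iota (lo + len) (M - (lo + len)).
  by rewrite -iotaD -iotaD; congr iota; lia.
rewrite !count_cat.
have outside lo' len' : (lo' + len' <= lo) || (lo + len <= lo') ->
    count (fun m => (lo <= m < lo + len) && P m) (iota lo' len') = 0.
  move=> disj; apply/eqP; rewrite -leqn0 leqNgt -has_count.
  by apply/hasPn => m; rewrite mem_iota => m_in; apply/nandP; left; lia.
rewrite (outside 0) ?add0n ?leqnn // (outside (lo + len)) ?leqnn ?orbT // addn0.
by apply: eq_in_count => m; rewrite mem_iota => ->.
Qed.

Lemma increasing_enum M n (K : {set 'I_M}) : n <= #|K| ->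
  exists idx : 'I_n -> nat,
    (forall i, exists2 k : 'I_M, k \in K & idx i = k) /\
    (forall i j : 'I_n, i < j -> idx i < idx j).
Proof.
move=> nK; pose s := map val (enum K).
have s_sorted : sorted ltn s.
  rewrite /s -[enum _](eq_filter (mem_enum _)).
  rewrite -(eq_filter (mem_map val_inj _)) -filter_map.
  by rewrite (sorted_filter ltn_trans) // unlock val_ord_enum iota_ltn_sorted.
have size_s i : i < n -> i < size s.
  by move=> lt_in; rewrite size_map -cardE; apply: leq_trans lt_in nK.
exists (fun i => nth 0 s i); split.
  move=> i; have /mapP [k] := mem_nth 0 (size_s i (ltn_ord i)).
  by rewrite mem_enum => Kk ->; exists k.
by move=> i j ij; apply: (sorted_ltn_nth ltn_trans) => //; rewrite inE size_s.
Qed.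

Lemma window_avoiding (P : pred nat) g k lo len :
  count P (iota lo len) <= k -> k.+1 * g.+1 <= len ->
  exists u, [/\ lo <= u, u + g <= lo + len & forall m, u <= m < u + g -> ~~ P m].
Proof.
elim: k lo len => [|k IH] lo len P_count len_big.
all: have split_count : count P (iota lo g) + count P (iota (lo + g) (len - g))
                          = count P (iota lo len)
       by rewrite -count_cat -iotaD subnKC //; lia.
all: have [first_free|first_busy] := posnP (count P (iota lo g)).
1,3: exists lo; split=> [||m m_in]; [done | lia |];
     move/eqP: first_free; rewrite -leqn0 leqNgt -has_count => /hasPn; apply;
     by rewrite mem_iota.
- lia.
- have [u [lo_u u_len u_free]] := IH (lo + g) (len - g) ltac:(lia) ltac:(lia).
  by exists u; split=> //; lia.
Qed.

Fixpoint level_bound (k N : nat) : nat :=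
  if k is k'.+1 then N * (level_bound k' N).+1 else 1.

Lemma level_window (b : nat -> nat) N k c lo len : 0 < N ->
  level_bound k N <= len -> (forall m, lo <= m < lo + len -> c < b m <= c + k) ->
  exists s lo' len', [/\ c < s <= c + k, lo <= lo', lo' + len' <= lo + len,
    (forall m, lo' <= m < lo' + len' -> s <= b m) &
    N <= count (fun m => b m == s) (iota lo' len')].
Proof.
move=> N_gt0; elim: k c lo len => [|k IH] c lo len len_big b_range.
  by have := b_range lo ltac:(move: len_big => /=; lia); lia.
have [often|rare] := leqP N (count (fun m => b m == c.+1) (iota lo len)).
  exists c.+1, lo, len; split=> // [|m m_in]; first lia.
  by have := b_range m m_in; lia.
have [lo2 [lo_lo2 lo2_len lo2_free]] :=
  @window_avoiding (fun m => b m == c.+1) (level_bound k N) N.-1 lo len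
    ltac:(lia) ltac:(rewrite prednK //).
have b_range2 m : lo2 <= m < lo2 + level_bound k N -> c.+1 < b m <= c.+1 + k.
  by move=> m_in; have := b_range m ltac:(lia); have := lo2_free m m_in; lia.
have [s [lo' [len' [s_range lo2_lo' lo'_len ge_s count_s]]]] :=
  IH c.+1 lo2 (level_bound k N) (leqnn _) b_range2.
by exists s, lo', len'; split=> //; lia.
Qed.

Section DisjointFamilies.
Variables (Ix V : finType) (F : Ix -> {set V}).

Definition disjoint_family (Ms : {set Ix}) :=
  [forall a in Ms, forall b in Ms, (a != b) ==> [disjoint F a & F b]].

Lemma disjoint_familyP (Ms : {set Ix}) :
  reflect {in Ms &, forall a b, a != b -> [disjoint F a & F b]} (disjoint_family Ms).
Proof.
apply: (iffP forall_inP) => [Ms_disj a b Ma Mb | Ms_disj a Ma].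
  by have /forall_inP/(_ b Mb)/implyP := Ms_disj a Ma.
by apply/forall_inP => b Mb; apply/implyP; apply: Ms_disj.
Qed.

Lemma maximal_disjoint_family (J : {set Ix}) :
  exists2 Ms : {set Ix}, Ms \subset J & disjoint_family Ms /\
    forall j, j \in J -> j \notin Ms -> exists2 a, a \in Ms & ~~ [disjoint F j & F a].
Proof.
pose P (Ms : {set Ix}) := (Ms \subset J) && disjoint_family Ms.
have P0 : P set0 by rewrite /P sub0set; apply/disjoint_familyP => a; rewrite inE.
have [Ms /maxsetP [/andP [MsJ Ms_disj] Ms_max] _] := maxset_exists P0.
have Ms_disj' := disjoint_familyP _ Ms_disj.
exists Ms => //; split=> // j Jj jMs; apply/forall_inPn/negP => /forall_inP j_free.
have P_jMs : P (j |: Ms).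
  rewrite /P subUset sub1set Jj MsJ; apply/disjoint_familyP => a b.
  case/setU1P => [-> | Ma] /setU1P [-> | Mb] ab; first by rewrite eqxx in ab.
  - exact: j_free.
  - by rewrite disjoint_sym; apply: j_free.
  - exact: Ms_disj'.
by move: jMs; rewrite -(Ms_max _ P_jMs (subsetUr _ _)) setU11.
Qed.

Lemma popular_point (J : {set Ix}) (W : {set V}) h :
  (forall j, j \in J -> exists2 v, v \in W & v \in F j) -> #|W| * h < #|J| ->
  exists2 v, v \in W & h < #|[set j in J | v \in F j]|.
Proof.
move=> meets J_big; apply/exists_inP; apply: contraT => /exists_inPn few.
have J_cover : J \subset \bigcup_(v in W) [set j in J | v \in F j].
  apply/subsetP => j Jj; have [v Wv Fv] := meets j Jj.
  by apply/bigcupP; exists v; rewrite // inE Jj.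
have sum_small : \sum_(v in W) #|[set j in J | v \in F j]| <= #|W| * h.
  by rewrite -sum_nat_const; apply: leq_sum => v Wv; rewrite leqNgt few.
have := leq_trans (subset_leq_card J_cover) (card_bigcup_le _ _); lia.
Qed.

End DisjointFamilies.

Fixpoint sunflower_bound (s n : nat) : nat :=
  if s is s'.+1 then n * s * sunflower_bound s' n + 1 else 2.

Lemma sunflower_bound_gt0 s n : 0 < sunflower_bound s n.
Proof. by case: s => //= s; rewrite addn1. Qed.

Lemma sunflower_bound_mono n : 0 < n -> {homo sunflower_bound^~ n : s t / s <= t}.
Proof.
move=> n_gt0; apply: (homo_leq leqnn leq_trans) => s.
by rewrite /= addn1; apply/leqW; rewrite leq_pmull // muln_gt0 n_gt0.
Qed.

(* Erdos-Rado: a maximal disjoint subfamily is either large or covers few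
   points, one of which lies in many sets; recurse on the sets through it. *)
Lemma sunflower (Ix V : finType) n s (F : Ix -> {set V}) (J : {set Ix}) :
  {in J &, injective F} -> (forall j, j \in J -> #|F j| = s) ->
  sunflower_bound s n <= #|J| ->
  exists (K : {set Ix}) (U : {set V}),
    [/\ K \subset J, n <= #|K| & {in K &, forall a b, a != b -> F a :&: F b = U}].
Proof.
elim: s F J => [|s IH] F J F_inj F_size J_big.
  have /card_gt1P [a [b [Ja Jb ab]]] : 1 < #|J| by [].
  case/eqP: ab; apply: F_inj => //.
  by rewrite (cards0_eq (F_size a Ja)) (cards0_eq (F_size b Jb)).
have [Ms MsJ [/disjoint_familyP Ms_disj Ms_max]] := maximal_disjoint_family F J.
have [n_le|Ms_small] := leqP n #|Ms|.
  exists Ms, set0; split=> // a b Ma Mb ab.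
  by apply/eqP; rewrite setI_eq0; apply: Ms_disj.
pose W := \bigcup_(a in Ms) F a.
have W_small : #|W| <= n * s.+1.
  apply: leq_trans (card_bigcup_le _ _) _.
  rewrite (eq_bigr (fun _ => s.+1)) => [|a Ma]; last exact/F_size/(subsetP MsJ).
  by rewrite sum_nat_const leq_mul2r ltnW ?orbT.
have meets j : j \in J -> exists2 v, v \in W & v \in F j.
  move=> Jj; case: (boolP (j \in Ms)) => [Mj | notMj].
    have /card_gt0P [v Fv] : 0 < #|F j| by rewrite F_size.
    by exists v => //; apply/bigcupP; exists j.
  have [a Ma] := Ms_max j Jj notMj; rewrite -setI_eq0 => /set0Pn [v].
  by rewrite inE => /andP [Fjv Fav]; exists v => //; apply/bigcupP; exists a.
have J_bigger : #|W| * sunflower_bound s n < #|J|.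
  by apply: leq_trans J_big; rewrite /= addn1 ltnS leq_mul2r W_small orbT.
have [v Wv v_popular] := popular_point meets J_bigger.
pose Jv := [set j in J | v \in F j].
have Fv_inj : {in Jv &, injective (fun j => F j :\ v)}.
  move=> a b; rewrite !inE => /andP [Ja Fav] /andP [Jb Fbv] Fab.
  by apply: F_inj => //; rewrite -(setD1K Fav) -(setD1K Fbv) Fab.
have Fv_size j : j \in Jv -> #|F j :\ v| = s.
  rewrite inE => /andP [Jj Fjv].
  by have := cardsD1 v (F j); rewrite Fjv F_size // add1n => -[].
have [K [U [KJv K_big K_sun]]] := IH _ _ Fv_inj Fv_size (ltnW v_popular).
have Kv a : a \in K -> (a \in J) && (v \in F a) by move/(subsetP KJv); rewrite inE.
exists K, (v |: U); split=> // [|a b Ka Kb ab].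
  by apply/subsetP => a /Kv /andP [].
rewrite -(K_sun a b Ka Kb ab); apply/setP => z; rewrite !inE.
case/andP: (Kv a Ka) => _ Fav; case/andP: (Kv b Kb) => _ Fbv.
by case: (eqVneq z v) => [->|] //=; rewrite Fav Fbv.
Qed.

Section MinusVertex.
Variables (I : finType) (T : rel I) (t : I).

Definition minus_vertex : rel I := [rel x y | T x y && (x != t) && (y != t)].

Lemma minus_vertex_sym : symmetric T -> symmetric minus_vertex.
Proof.
move=> T_sym x y; rewrite /minus_vertex /= T_sym.
by case: (x != t); case: (y != t); rewrite ?andbT ?andbF.
Qed.

Lemma minus_vertex_pathW a q : path minus_vertex a q -> path T a q.
Proof. by apply: sub_path => x y /andP [/andP []]. Qed.

Lemma minus_vertex_path_notin a q : path minus_vertex a q -> t \notin q.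
Proof.
elim: q a => //= b q IH a /andP [/andP [_ bt] /IH].
by rewrite inE negb_or eq_sym bt.
Qed.

Lemma path_minus_vertex a q : path T a q -> t \notin a :: q -> path minus_vertex a q.
Proof.
elim: q a => //= b q IH a /andP [ab b_path].
rewrite !inE !negb_or -!andbA => /and3P [ta tb tq].
by rewrite /minus_vertex /= ab eq_sym ta eq_sym tb IH // inE negb_or tb.
Qed.

Lemma connect_minus_vertex_neq y v : y != t -> connect minus_vertex y v -> v != t.
Proof.
move=> yt /connectP [p p_path ->]; have := mem_last y p.
rewrite inE => /orP [/eqP -> // | vp].
by apply: contraNneq (minus_vertex_path_notin p_path) => <-.
Qed.

End MinusVertex.

Section TreeBranches.
Variables (I : finType) (T : rel I).
Hypothesis T_tree : is_tree T.

Lemma tree_neighbour_neq t y : T t y -> y != t.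
Proof.
by move=> ty; case: T_tree => _ T_irr _ _; apply: contraTneq ty => ->; rewrite T_irr.
Qed.

Lemma tree_branch_unique t y1 y2 :
  T t y1 -> T t y2 -> connect (minus_vertex T t) y1 y2 -> y1 = y2.
Proof.
case: (T_tree) => _ _ _ T_uniq ty1 ty2 /connectP [q q_path].
case: (shortenP q_path) => {q_path} q q_path q_uniq _ y2_last.
have t_q := minus_vertex_path_notin q_path.
suff: y1 :: q = [:: y2] by case.
apply: (T_uniq t); rewrite /upath /= ?ty1 ?ty2 ?(minus_vertex_pathW q_path) -?y2_last //.
  by move: q_uniq; rewrite /= !inE negb_or eq_sym (tree_neighbour_neq ty1) t_q.
by rewrite inE eq_sym (tree_neighbour_neq ty2).
Qed.

Lemma tree_branch_exists t s :
  s != t -> exists2 y, T t y & connect (minus_vertex T t) y s.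
Proof.
case: (T_tree) => _ _ T_conn _ st; have /connectP [p p_path] := T_conn t s.
case: (shortenP p_path) => {p_path} [[|y q]] /=.
  by move=> _ _ _ ts; rewrite ts eqxx in st.
move=> /andP [ty q_path] /andP [tyq q_uniq] _ s_last; exists y => //.
by apply/connectP; exists q => //; apply: path_minus_vertex.
Qed.

Lemma tree_path_across_branches t y1 y2 a b :
  T t y1 -> T t y2 -> y1 != y2 ->
  connect (minus_vertex T t) y1 a -> connect (minus_vertex T t) y2 b ->
  on_tpath T a b t.
Proof.
move=> ty1 ty2 y12 y1a y2b.
have T_sym : symmetric T by case: T_tree.
have mv_sym := minus_vertex_sym t T_sym.
have branches_disjoint v :
    connect (minus_vertex T t) y1 v -> connect (minus_vertex T t) y2 v -> False.
  move=> y1v y2v; case/eqP: y12; apply: tree_branch_unique ty1 ty2 _.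
  by apply: connect_trans y1v _; rewrite (sym_connect_sym mv_sym).
have /connectP [q1 q1_path] : connect (minus_vertex T t) a y1.
  by rewrite (sym_connect_sym mv_sym).
case: (shortenP q1_path) => {q1_path} q1 q1_path q1_uniq _ y1_last.
case/connectP: y2b => q2 q2_path.
case: (shortenP q2_path) => {q2_path} q2 q2_path q2_uniq _ b_last.
have in1 v : v \in a :: q1 -> connect (minus_vertex T t) y1 v.
  by move=> v_in; apply: connect_trans y1a _; apply: path_connect q1_path v v_in.
have in2 v : v \in y2 :: q2 -> connect (minus_vertex T t) y2 v.
  exact: path_connect q2_path v.
have t_notin1 : t \notin a :: q1.
  by apply/negP => /in1 /(connect_minus_vertex_neq (tree_neighbour_neq ty1)); rewrite eqxx.
have t_notin2 : t \notin y2 :: q2.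
  by apply/negP => /in2 /(connect_minus_vertex_neq (tree_neighbour_neq ty2)); rewrite eqxx.
have q1_q2 : ~~ has (mem (a :: q1)) (t :: y2 :: q2).
  apply/hasPn => v; rewrite inE => /orP [/eqP -> // | v2].
  by apply/negP => v1; apply: branches_disjoint (in1 v v1) (in2 v v2).
exists (q1 ++ t :: y2 :: q2); split; last by rewrite !(inE, mem_cat) eqxx !orbT.
- rewrite /upath -cat_cons cat_uniq q1_uniq q1_q2 cons_uniq t_notin2 q2_uniq !andbT.
  rewrite cat_path /= -y1_last (minus_vertex_pathW q1_path) T_sym ty1 ty2 /=.
  exact: minus_vertex_pathW q2_path.
- by rewrite last_cat /= -b_last.
Qed.

End TreeBranches.

Lemma card_incident_le (V E : finType) (ends : E -> V * V) d (S : {set V}) :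
  max_deg_le ends d ->
  #|[set e | ((ends e).1 \in S) || ((ends e).2 \in S)]| <= #|S| * d.
Proof.
move=> deg_d; pose inc z := [set e | ((ends e).1 == z) || ((ends e).2 == z)].
apply: leq_trans (_ : #|\bigcup_(z in S) inc z| <= _).
  apply/subset_leq_card/subsetP => e; rewrite inE => /orP [e1 | e2]; apply/bigcupP.
  - by exists (ends e).1; rewrite // inE eqxx.
  - by exists (ends e).2; rewrite // inE eqxx orbT.
apply: leq_trans (card_bigcup_le _ _) _.
by rewrite -sum_nat_const; apply: leq_sum => z _; apply: deg_d.
Qed.

Section Branches.
Variables (V E I : finType) (ends : E -> V * V) (T : rel I) (Y : I -> {set V}).
Hypothesis decomp : tree_decomp ends T Y.

(* [beyond t y v]: v is a vertex of G outside Y t that lies in a bag of the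
   component of T - t containing the neighbour y of t. *)
Definition beyond t y v :=
  (v \notin Y t) && [exists a, connect (minus_vertex T t) y a && (v \in Y a)].

Lemma beyond_unique t y1 y2 v :
  T t y1 -> T t y2 -> beyond t y1 v -> beyond t y2 v -> y1 = y2.
Proof.
case: decomp => T_tree _ _ W2 ty1 ty2 /andP [vt /existsP [a /andP [y1a va]]].
case/andP=> _ /existsP [b /andP [y2b vb]]; apply/eqP; apply: contraNT vt => y12.
have /subsetP := W2 a t b (tree_path_across_branches T_tree ty1 ty2 y12 y1a y2b).
by apply; rewrite inE va vb.
Qed.

Lemma beyond_adj t y u v :
  T t y -> gadj ends u v -> beyond t y u -> v \notin Y t -> beyond t y v.
Proof.
case: (decomp) => T_tree _ bag_edge _ ty /existsP [e uv_e] u_beyond vt.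
have [s /andP [s1 s2]] := bag_edge e.
have [us vs] : u \in Y s /\ v \in Y s.
  by case/orP: uv_e => /eqP ends_e; rewrite ends_e in s1 s2.
have st : s != t by apply: contraNneq vt => <-.
have [y' ty' y's] := tree_branch_exists T_tree st.
have u_beyond' : beyond t y' u.
  case/andP: u_beyond => ut _; rewrite /beyond ut.
  by apply/existsP; exists s; rewrite y's us.
rewrite /beyond vt (beyond_unique ty ty' u_beyond u_beyond').
by apply/existsP; exists s; rewrite y's vs.
Qed.

Definition crossing t y e :=
  ((ends e).1 \in Y t) && beyond t y (ends e).2 ||
  ((ends e).2 \in Y t) && beyond t y (ends e).1.

Lemma walk_crossing t y u q : T t y -> path (gadj ends) u q ->
  beyond t y u -> ~~ beyond t y (last u q) -> exists e, crossing t y e.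
Proof.
move=> ty; elim: q u => [|v q IH] u /=; first by move=> _ ->.
case/andP=> uv v_path u_beyond v_last.
case vt: (v \in Y t); last exact: IH v_path (beyond_adj ty uv u_beyond (negbT vt)) v_last.
case/existsP: uv => e /orP [] /eqP ends_e;
  by exists e; rewrite /crossing ends_e /= vt u_beyond ?orbT.
Qed.

Lemma crossing_unique t y1 y2 e :
  T t y1 -> T t y2 -> crossing t y1 e -> crossing t y2 e -> y1 = y2.
Proof.
move=> ty1 ty2; rewrite /crossing /beyond.
case e1: ((ends e).1 \in Y t); case e2: ((ends e).2 \in Y t) => //= cr1 cr2.
all: rewrite ?orbF in cr1 cr2.
- by apply: (@beyond_unique t y1 y2 (ends e).2 ty1 ty2); rewrite /beyond e2.
- by apply: (@beyond_unique t y1 y2 (ends e).1 ty1 ty2); rewrite /beyond e1.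
Qed.

Hypothesis branches_leave_bag : forall t0 t, t != t0 ->
  exists t', connect (minus_vertex T t0) t t' /\ ~~ (Y t' \subset Y t0).

Lemma beyond_exists t y : T t y -> exists v, beyond t y v.
Proof.
case: decomp => T_tree _ _ _ ty.
have [t' [yt' /subsetPn [v vt' vt]]] := branches_leave_bag (tree_neighbour_neq T_tree ty).
by exists v; rewrite /beyond vt; apply/existsP; exists t'; rewrite yt' vt'.
Qed.

Lemma crossing_exists t y y' : gconnected ends ->
  T t y -> T t y' -> y != y' -> exists e, crossing t y e.
Proof.
move=> G_conn ty ty' yy'.
have [v v_beyond] := beyond_exists ty; have [v' v'_beyond] := beyond_exists ty'.
have /connectP [q q_path v'_last] := G_conn v v'.
apply: (walk_crossing ty q_path v_beyond); rewrite -v'_last.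
apply: contra yy' => v'_beyond_y; apply/eqP.
exact: beyond_unique ty ty' v'_beyond_y v'_beyond.
Qed.

Lemma lean_nbhd_bound w d : gconnected ends -> max_deg_le ends d -> width_le Y w ->
  forall t, #|[set y | T t y]| <= (w.+1 * d).+1.
Proof.
move=> G_conn deg_d width_w t.
have [N_small|/card_gt1P [y1 [y2 [ty1 ty2 y12]]]] := leqP #|[set y | T t y]| 1.
  exact: leq_trans N_small _.
move: ty1 ty2; rewrite !inE => ty1 ty2; apply/leqW.
apply: leq_trans (leq_trans (card_incident_le (Y t) deg_d) _); last first.
  by rewrite leq_mul2r width_w orbT.
apply: (@leq_card_witness _ _ _ _ (crossing t)) => [y | y y' e];
  rewrite !inE; last first.
  by move=> ty ty'; apply: crossing_unique.
move=> ty; have [y' ty' yy'] : exists2 y', T t y' & y != y'.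
  by case: (eqVneq y y1) => [->|]; [exists y2 | exists y1].
have [e cr] := crossing_exists G_conn ty ty' yy'.
by exists e => //; rewrite inE; case/orP: cr => /andP [-> _]; rewrite ?orbT.
Qed.

End Branches.

Section LongPath.
Variables (I : finType) (T : rel I).

Definition nbhd_step (A : {set I}) : {set I} := \bigcup_(z in A) [set y | T z y].

Lemma last_in_nbhd_iter q (A : {set I}) a :
  a \in A -> path T a q -> last a q \in iter (size q) nbhd_step A.
Proof.
elim: q A a => [|b q IH] A a Aa //= /andP [ab b_path].
rewrite -iterS iterSr; apply: IH b_path.
by apply/bigcupP; exists a; rewrite ?inE.
Qed.

Lemma card_nbhd_iter D x k : (forall t, #|[set y | T t y]| <= D) ->
  #|iter k nbhd_step [set x]| <= D ^ k.
Proof.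
move=> deg_D; elim: k => [|k IH]; first by rewrite cards1.
rewrite iterS expnSr; apply: leq_trans (card_bigcup_le _ _) _.
apply: leq_trans (_ : \sum_(z in iter k nbhd_step [set x]) D <= _).
  exact: leq_sum.
by rewrite sum_nat_const leq_mul2r IH orbT.
Qed.

Lemma long_upath D L x :
  is_tree T -> (forall t, #|[set y | T t y]| <= D) -> 0 < D ->
  L.+1 * D ^ L < #|I| -> exists p, upath T x p /\ L < size p.
Proof.
case=> _ _ T_conn _ deg_D D_gt0 I_big.
pose ball := \bigcup_(k < L.+1) iter k nbhd_step [set x].
have ball_small : #|ball| <= L.+1 * D ^ L.
  apply: leq_trans (card_bigcup_le _ _) _.
  apply: leq_trans (_ : \sum_(k < L.+1) D ^ L <= _).
    by apply: leq_sum => k _; apply: leq_trans (card_nbhd_iter x k deg_D) _;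
       rewrite leq_pexp2l // -ltnS.
  by rewrite sum_nat_const card_ord.
have [y y_far] : exists y, y \notin ball.
  apply/existsP; rewrite -negb_forall; apply: contraTN I_big => /forallP ball_full.
  rewrite -leqNgt -cardsT; apply: leq_trans ball_small.
  by apply/subset_leq_card/subsetP => z _; apply: ball_full.
have /connectP [q q_path] := T_conn x y.
case: (shortenP q_path) => {q_path} p p_path p_uniq _ y_last.
exists p; split; first by rewrite /upath p_path p_uniq.
rewrite ltnNge; apply: contra y_far => p_short.
apply/bigcupP; exists (Ordinal (p_short : size p < L.+1)) => //.
by rewrite y_last; apply: last_in_nbhd_iter; rewrite ?set11.
Qed.

End LongPath.

Lemma card_le_bags (V I : finType) (Y : I -> {set V}) w :
  (forall v, exists t, v \in Y t) -> width_le Y w -> #|V| <= w.+1 * #|I|.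
Proof.
move=> bags_cover width_w.
apply: leq_trans (_ : #|\bigcup_(t in [set: I]) Y t| <= _).
  rewrite -cardsT; apply/subset_leq_card/subsetP => v _.
  by have [t vt] := bags_cover v; apply/bigcupP; exists t.
apply: leq_trans (card_bigcup_le _ _) _.
by rewrite mulnC -cardsT -sum_nat_const; apply: leq_sum.
Qed.

Lemma sunflower_in_window (V : finType) (B : nat -> {set V}) n k lo len :
  0 < n -> {in [pred m | lo <= m < lo + len] &, injective B} ->
  (forall m, lo <= m < lo + len -> 0 < #|B m| <= k) ->
  level_bound k (sunflower_bound k n) <= len ->
  exists s, 0 < s <= k /\ exists idx : 'I_n -> nat, [/\
    forall i, lo <= idx i < lo + len,
    forall i j : 'I_n, i < j -> idx i < idx j,
    forall i, #|B (idx i)| = s,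
    forall (i j : 'I_n) m, idx i <= m <= idx j -> s <= #|B m| &
    exists U, forall i j, i != j -> B (idx i) :&: B (idx j) = U].
Proof.
move=> n_gt0 B_inj B_size len_big.
have [s [lo' [len' [s_range lo_lo' lo'_len ge_s count_s]]]] :=
  level_window (b := fun m => #|B m|) (c := 0) (sunflower_bound_gt0 k n)
    len_big B_size.
pose J := [set i : 'I_(lo + len) | (lo' <= i < lo' + len') && (#|B i| == s)].
have J_window (j : 'I_(lo + len)) : j \in J -> lo <= j < lo + len.
  rewrite inE => /andP [j_in _]; lia.
have J_inj : {in J &, injective (fun i : 'I_(lo + len) => B i)}.
  by move=> i j Ji Jj Bij; apply/val_inj/B_inj; rewrite ?inE ?J_window.
have J_size j : j \in J -> #|B j| = s by rewrite inE => /andP [_ /eqP].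
have J_big : sunflower_bound s n <= #|J|.
  rewrite (@card_window _ lo' len' (fun m => #|B m| == s)); last lia.
  by apply: leq_trans count_s; apply: sunflower_bound_mono; lia.
have [K [U [KJ K_big K_sun]]] := sunflower J_inj J_size J_big.
have [idx [idx_K idx_incr]] := increasing_enum K_big.
have idx_J i : lo' <= idx i < lo' + len' /\ #|B (idx i)| = s.
  by have [a /(subsetP KJ)] := idx_K i; rewrite inE => /andP [a_in /eqP Ba] ->.
have idx_inj : injective idx.
  move=> i j idx_ij; apply/val_inj; case: (ltngtP i j) => // [ij | ji].
  - by have := idx_incr _ _ ij; rewrite idx_ij ltnn.
  - by have := idx_incr _ _ ji; rewrite idx_ij ltnn.
exists s; split; first lia.
exists idx; split=> // [i | i | i j m m_in |].
- by have [] := idx_J i; lia.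
- by case: (idx_J i).
- by apply: ge_s; have [] := idx_J i; have [] := idx_J j; lia.
exists U => i j ij; have [a Ka idx_a] := idx_K i; have [b Kb idx_b] := idx_K j.
rewrite idx_a idx_b; apply: K_sun => //; apply: contraNneq ij => ab.
by apply/eqP/idx_inj; rewrite idx_a idx_b ab.
Qed.

Lemma nonempty_window (V : finType) (B : nat -> {set V}) g N :
  {in [pred m | m <= N] &, injective B} -> 2 * g.+1 < N ->
  exists u, [/\ 0 < u, u + g <= N & forall m, u <= m < u + g -> B m != set0].
Proof.
move=> B_inj N_big.
have one_empty : count (fun m => B m == set0) (iota 1 (N - 1)) <= 1.
  apply: count_inj_eq_le1 (iota_uniq _ _) _; apply: sub_in2 B_inj => m.
  by rewrite mem_iota inE; lia.
have window_fits : 1.+1 * g.+1 <= N - 1 by lia.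
have [u [u_ge1 u_le u_nonempty]] := window_avoiding one_empty window_fits.
by exists u; split=> //; lia.
Qed.

Definition window_len w n := level_bound w.+1 (sunflower_bound w.+1 n).

Definition path_len w n := 2 * (window_len w n).+1.

Definition lemma6p4_bound n w d :=
  w.+1 * ((path_len w n).+1 * (w.+1 * d).+1 ^ path_len w n) + 1.

Theorem lemma6p4 :
  exists f : nat -> nat -> nat -> nat,
  forall n w d : nat, 0 < n -> 0 < w -> 0 < d ->
  forall (V E : finType) (ends : E -> V * V),
    loopless ends -> gconnected ends -> max_deg_le ends d ->
  forall (I : finType) (T : rel I) (Y : I -> {set V}),
    lean_tree_decomp ends T Y -> width_le Y w ->
    f n w d <= #|V| ->
    exists (x : I) (p : seq I) (tt : 'I_n -> I) (idx : 'I_n -> nat),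
      upath T x p /\
      [/\ (* t_i are interior vertices of the path x :: p, at positions idx i *)
          (forall i, 0 < idx i < size p),
          (forall i, nth x (x :: p) (idx i) = tt i),
          (forall i j : 'I_n, i < j -> idx i < idx j),
          (* (i) *)
          (exists s, [/\ 0 < s <= w.+1,
             (forall i, #|Y (tt i)| = s) &
             (forall (i j : 'I_n) (m : nat), idx i <= m <= idx j ->
                s <= #|Y (nth x (x :: p) m)|)]) &
          (* (ii) *)
          (exists U : {set V}, forall i j, i != j -> Y (tt i) :&: Y (tt j) = U)].
Proof.
exists lemma6p4_bound => n w d n_gt0 _ _ V E ends _ G_conn deg_d I T Y.
case=> decomp _ bags_distinct branches_leave width_w V_big.
have [T_tree bags_cover _ _] := decomp.
have I_big : (path_len w n).+1 * (w.+1 * d).+1 ^ path_len w n < #|I|.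
  rewrite -(ltn_pmul2l (ltn0Sn w)); move: V_big (card_le_bags bags_cover width_w).
  rewrite /lemma6p4_bound; lia.
have [x _] : exists x, x \in I by apply/card_gt0P; apply: leq_ltn_trans I_big.
have [p [p_upath p_long]] := long_upath x T_tree
  (lean_nbhd_bound decomp branches_leave G_conn deg_d width_w) (ltn0Sn _) I_big.
pose B m := Y (nth x (x :: p) m).
have B_inj : {in [pred m | m <= size p] &, injective B}.
  move=> m1 m2 m1_in m2_in; apply: contra_eq => m12; apply: bags_distinct.
  by case/andP: p_upath => _ p_uniq; rewrite nth_uniq.
have [u [u_ge1 u_le u_nonempty]] := nonempty_window B_inj p_long.
have window_inj : {in [pred m | u <= m < u + window_len w n] &, injective B}.
  by apply: sub_in2 B_inj => m; rewrite !inE; lia.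
have window_size m : u <= m < u + window_len w n -> 0 < #|B m| <= w.+1.
  by move=> m_in; rewrite card_gt0 u_nonempty // width_w.
have [s [s_range [idx [idx_in idx_incr idx_size ge_s sun]]]] :=
  sunflower_in_window n_gt0 window_inj window_size (leqnn _).
exists x, p, (fun i => nth x (x :: p) (idx i)), idx; split=> //; split=> //.
- move=> i; case/andP: (idx_in i) => u_i i_lt.
  by rewrite (leq_trans u_ge1 u_i) (leq_trans i_lt u_le).
- by exists s.
Qed.
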